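(* Let $n\ge1$ and $p$ a prime. The quotient $\Sigma(n,p)/\mathcal{R}(n,p)$ of the $p$-modular descent algebra by its radical is commutative.
   Context: A composition of $n$ is a sequence of positive integers with sum $n$. The descent algebra $\Sigma_n$ has basis $\{B_q\}$ indexed by compositions of $n$ with multiplication $B_qB_r=\sum_{Z\in S(q,r)}B_{c(Z)}$, where for $q=[a_1,\dots,a_s]$, $r=[b_1,\dots,b_t]$, $S(q,r)$ is the set of $s\times t$ non-negative integer matrices with row sums $a_i$ and column sums $b_j$, and $c(Z)$ is the composition obtained by reading the entries of $Z$ row by row and omitting zeros. Let $\mathcal{Z}_n$ be the subring of integral combinations of the $B_q$ and $\Sigma(n,p)=\mathcal{Z}_n/p\mathcal{Z}_n$ (the $p$-modular descent algebra), an $\mathbb{F}_p$-algebra with basis $\overline{B}_q$ (images of the $B_q$). $\mathcal{R}(n,p)$ denotes the (Jacobson) radical of $\Sigma(n,p)$. *)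

From HB Require Import structures.
From mathcomp Require Import all_boot all_order all_algebra.
Set Implicit Arguments. Unset Strict Implicit. Unset Printing Implicit Defensive.
Import GRing.Theory.
Local Open Scope ring_scope.

Definition is_comp (n : nat) (s : seq nat) : bool :=
  all (fun a => (0 < a)%N) s && (sumn s == n).

(* A finite list of candidates containing every composition of n:
   all sequences of length <= n with entries <= n. *)
Definition comp_cands (n : nat) : seq (seq nat) :=
  flatten [seq [seq map (@nat_of_ord n.+1) (tval t) | t <- enum {: k.-tuple 'I_n.+1}]
          | k <- iota 0 n.+1].

Definition comps (n : nat) : seq (seq nat) := [seq s <- comp_cands n | is_comp n s].

Definition Comp (n : nat) := seq_sub (comps n).

(* Non-negative integer s x t matrices; entries of matrices in S(q,r) are
   bounded by n, so entries in 'I_n.+1 lose nothing. *)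
Definition in_S (n : nat) (q r : seq nat) (Z : 'M['I_n.+1]_(size q, size r)) : bool :=
  [forall i : 'I_(size q), (\sum_(j < size r) (Z i j : nat))%N == nth 0%N q i] &&
  [forall j : 'I_(size r), (\sum_(i < size q) (Z i j : nat))%N == nth 0%N r j].

Definition cZ (n : nat) (q r : seq nat) (Z : 'M['I_n.+1]_(size q, size r)) : seq nat :=
  [seq x <- flatten [seq [seq (Z i j : nat) | j <- enum 'I_(size r)]
                    | i <- enum 'I_(size q)] | x != 0%N].

Definition coef (n : nat) (q r s : seq nat) : nat :=
  #|[set Z : 'M['I_n.+1]_(size q, size r) | in_S Z && (cZ Z == s)]|.

(* Elements: F_p-linear combinations of the basis Bbar_q, q a composition. *)
Definition Sig (n p : nat) := {ffun Comp n -> 'F_p}.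

Definition Bbar (n p : nat) (q : Comp n) : Sig n p := [ffun s => (s == q)%:R].

Definition sig0 (n p : nat) : Sig n p := [ffun _ => 0].
Definition sig_add (n p : nat) (x y : Sig n p) : Sig n p := [ffun s => x s + y s].
Definition sig_opp (n p : nat) (x : Sig n p) : Sig n p := [ffun s => - x s].
Definition sig_sub (n p : nat) (x y : Sig n p) : Sig n p := [ffun s => x s - y s].

(* Bbar_q Bbar_r = sum_{Z in S(q,r)} Bbar_{c(Z)}, extended bilinearly. *)
Definition sig_mul (n p : nat) (x y : Sig n p) : Sig n p :=
  [ffun s : Comp n => \sum_(q : Comp n) \sum_(r : Comp n)
      x q * y r * (coef n (val q) (val r) (val s))%:R].

Definition left_ideal (n p : nat) (I : {set Sig n p}) : Prop :=
  [/\ sig0 n p \in I,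
      (forall x y, x \in I -> y \in I -> sig_add x y \in I),
      (forall x, x \in I -> sig_opp x \in I) &
      (forall a x, x \in I -> sig_mul a x \in I)].

Definition maximal_left_ideal (n p : nat) (I : {set Sig n p}) : Prop :=
  [/\ left_ideal I, I != [set: Sig n p] &
      forall J : {set Sig n p}, left_ideal J -> I \subset J ->
        J = I \/ J = [set: Sig n p]].

Definition in_radical (n p : nat) (x : Sig n p) : Prop :=
  forall I : {set Sig n p}, maximal_left_ideal I -> x \in I.

From mathcomp Require Import all_boot all_order all_algebra all_fingroup.
Set Implicit Arguments. Unset Strict Implicit. Unset Printing Implicit Defensive.
Import GRing.Theory.

(* Call the shape of a composition its multiset of parts, and let D be the set of
   elements annihilated by every linear functional that is constant on shape classes.
   Transposing the matrices Z in S(q,r) only rearranges the compositions c(Z), and so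
   does permuting their columns; hence such a functional takes the same value on
   B_q B_r and B_r B_q, and a value on B_q B_r that depends on r only through its shape.
   So D contains all commutators and is a left ideal.
   Right multiplication by an element of D raises the minimal length of the
   compositions in the support, so for y in D the right powers of y vanish from the
   (n+1)-st on and B_(n) - y has a left inverse.  A left ideal of such quasi-regular
   elements lies in every maximal left ideal. *)

Lemma size_le_sumn (s : seq nat) : all (fun a => 0 < a) s -> size s <= sumn s.
Proof. by elim: s => //= a s IH /andP[a_gt0 /IH]; rewrite -add1n; apply: leq_add. Qed.

Lemma mem_le_sumn (s : seq nat) x : x \in s -> x <= sumn s.
Proof.
elim: s => //= a s IH; rewrite inE => /orP[/eqP->|/IH]; first exact: leq_addr.
by move/leq_trans; apply; apply: leq_addl.
Qed.

Lemma mem_comp_cands n s : is_comp n s -> s \in comp_cands n.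
Proof.
case/andP=> s_gt0 /eqP sum_s; apply/flatten_mapP; exists (size (map (@inord n) s)).
  by rewrite mem_iota add0n size_map ltnS -sum_s size_le_sumn.
apply/mapP; exists (in_tuple (map (@inord n) s)); first by rewrite mem_enum.
rewrite /= -map_comp map_id_in // => x xs /=.
by rewrite inordK // ltnS -sum_s mem_le_sumn.
Qed.

Lemma mem_comps n s : (s \in comps n) = is_comp n s.
Proof. by rewrite mem_filter andb_idr //; apply: mem_comp_cands. Qed.

Lemma perm_mem_comps n s t : perm_eq s t -> (s \in comps n) = (t \in comps n).
Proof.
move=> st; rewrite !mem_comps /is_comp (perm_sumn st).
by rewrite !all_count (seq.permP st) (seq.perm_size st).
Qed.

Section Compositions.
Variable n : nat.

Lemma comp_sumn (q : Comp n) : sumn (val q) = n.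
Proof. by have := ssvalP q; rewrite mem_comps => /andP[_ /eqP]. Qed.

Lemma comp_gt0 (q : Comp n) (i : 'I_(size (val q))) : 0 < nth 0 (val q) i.
Proof. by have := ssvalP q; rewrite mem_comps => /andP[/allP-> //]; rewrite mem_nth. Qed.

Lemma size_comp (q : Comp n) : size (val q) <= n.
Proof.
have := ssvalP q; rewrite mem_comps => /andP[q_gt0 _].
by rewrite -[X in _ <= X](comp_sumn q) size_le_sumn.
Qed.

Lemma comp_single : 0 < n -> [:: n] \in comps n.
Proof. by move=> n_gt0; rewrite mem_comps /is_comp /= n_gt0 addn0 eqxx. Qed.

End Compositions.

Lemma map_nth_enum_ord (q : seq nat) :
  [seq nth 0 q i | i : 'I_(size q) <- enum 'I_(size q)] = q.
Proof. by rewrite -[RHS](mkseq_nth 0) /mkseq -val_enum_ord -map_comp. Qed.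

Section Readings.
Variable N : nat.

Definition row_word a b (F : 'I_a -> 'I_b -> nat) : seq nat :=
  flatten [seq [seq F i j | j <- enum 'I_b] | i <- enum 'I_a].

(* [cZ] and [in_S] are [mx_reading] and [has_margins (nth 0 q) (nth 0 r)] up to
   conversion; the dimensions are freed from [q] and [r] so that matrices can be
   transposed and have their columns permuted. *)
Definition mx_reading a b (Z : 'M['I_N]_(a, b)) : seq nat :=
  [seq x <- row_word (fun i j => (Z i j : nat)) | x != 0].

Definition has_margins a b (R C : nat -> nat) (Z : 'M['I_N]_(a, b)) : bool :=
  [forall i : 'I_a, \sum_(j < b) (Z i j : nat) == R i] &&
  [forall j : 'I_b, \sum_(i < a) (Z i j : nat) == C j].

Lemma count_row_word a b (F : 'I_a -> 'I_b -> nat) (P : pred nat) :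
  count P (row_word F) = \sum_i \sum_j P (F i j).
Proof.
rewrite /row_word count_flatten -map_comp sumnE big_map enumT.
by apply: eq_bigr => i _ /=; rewrite count_map -sum1_count enumT big_mkcond.
Qed.

Lemma perm_mx_reading_tr a b (Z : 'M['I_N]_(a, b)) :
  perm_eq (mx_reading Z^T) (mx_reading Z).
Proof.
apply: perm_filter; apply/seq.permP => P; rewrite !count_row_word exchange_big.
by apply: eq_bigr => i _; apply: eq_bigr => j _; rewrite mxE.
Qed.

Lemma perm_mx_reading_col a b (s : 'S_b) (Z : 'M['I_N]_(a, b)) :
  perm_eq (mx_reading (col_perm s Z)) (mx_reading Z).
Proof.
apply: perm_filter; apply/seq.permP => P; rewrite !count_row_word.
apply: eq_bigr => i _; rewrite [RHS](reindex_inj (@perm_inj _ s)).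
by apply: eq_bigr => j _; rewrite mxE.
Qed.

Lemma has_margins_tr a b (R C : nat -> nat) (Z : 'M['I_N]_(a, b)) :
  has_margins C R Z^T = has_margins R C Z.
Proof.
rewrite /has_margins andbC.
by congr andb; apply: eq_forallb => i; congr (_ == _); apply: eq_bigr => j _; rewrite mxE.
Qed.

Lemma has_margins_col a b (R C C' : nat -> nat) (s : 'S_b) (Z : 'M['I_N]_(a, b)) :
  (forall j : 'I_b, C' j = C (s j)) -> has_margins R C' (col_perm s Z) = has_margins R C Z.
Proof.
move=> C'E; rewrite /has_margins; congr andb.
  apply: eq_forallb => i; rewrite [in RHS](reindex_inj (@perm_inj _ s)).
  by congr (_ == _); apply: eq_bigr => j _; rewrite mxE.
have colE j : \sum_(i < a) (col_perm s Z i j : nat) = \sum_(i < a) (Z i (s j) : nat).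
  by apply: eq_bigr => i _; rewrite mxE.
apply/forallP/forallP => Z_C j; last by rewrite colE C'E.
by have := Z_C (s^-1 j)%g; rewrite colE C'E permKV.
Qed.

Lemma col_perm_inj a b (s : 'S_b) : injective (@col_perm 'I_N a b s).
Proof.
apply: (can_inj (g := col_perm s^-1)) => Z.
by rewrite -col_permM mulVg col_perm1.
Qed.

Section SymmetricSums.
Variables (V : nmodType) (G : seq nat -> V).
Hypothesis G_perm : forall s t, perm_eq s t -> G s = G t.

Lemma sum_mx_reading_tr a b (R C : nat -> nat) :
  (\sum_(Z : 'M['I_N]_(a, b) | has_margins R C Z) G (mx_reading Z) =
   \sum_(Z : 'M['I_N]_(b, a) | has_margins C R Z) G (mx_reading Z))%R.
Proof.
rewrite [RHS](reindex (@trmx 'I_N a b)) /=; last first.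
  by exists (@trmx 'I_N b a) => Z _; rewrite trmxK.
apply: eq_big => [Z|Z _]; first by rewrite has_margins_tr.
by apply: G_perm; rewrite perm_sym perm_mx_reading_tr.
Qed.

Lemma sum_mx_reading_perm_col a (R : nat -> nat) (c c' : seq nat) : perm_eq c c' ->
  (\sum_(Z : 'M['I_N]_(a, size c) | has_margins R (nth 0 c) Z) G (mx_reading Z) =
   \sum_(Z : 'M['I_N]_(a, size c') | has_margins R (nth 0 c') Z) G (mx_reading Z))%R.
Proof.
move=> cc'; have /tuple_permP[s c'E] : perm_eq c' (in_tuple c) by rewrite perm_sym.
have C'E (j : 'I_(size c)) : nth 0 c' j = nth 0 c (s j).
  by rewrite c'E nth_mktuple (tnth_nth 0).
move: (nth 0 c') C'E => C' C'E; rewrite -(seq.perm_size cc').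
rewrite [RHS](reindex_inj (@col_perm_inj a _ s)) /=.
apply: eq_big => [Z|Z _]; first by rewrite (has_margins_col _ _ C'E).
by apply: G_perm; rewrite perm_sym perm_mx_reading_col.
Qed.

End SymmetricSums.
End Readings.

Lemma size_mx_reading N a b (Z : 'M['I_N]_(a, b)) : size (mx_reading Z) <= a * b.
Proof.
rewrite size_filter (leq_trans (count_size _ _)) // -count_predT count_row_word.
rewrite (eq_bigr (fun _ => b)) ?sum_nat_const ?card_ord // => i _.
by rewrite sum1_card card_ord.
Qed.

Section PositiveRowMargins.
Variables (N a b : nat) (R C : nat -> nat) (Z : 'M['I_N]_(a, b)).
Hypotheses (Z_margins : has_margins R C Z) (R_gt0 : forall i : 'I_a, 0 < R i).

Let row_reading i := [seq x <- [seq (Z i j : nat) | j <- enum 'I_b] | x != 0].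

Let mx_reading_flatten : mx_reading Z = flatten [seq row_reading i | i <- enum 'I_a].
Proof. by rewrite /mx_reading /row_word filter_flatten -map_comp. Qed.

Let sumn_row_reading i : sumn (row_reading i) = R i.
Proof.
have -> : sumn (row_reading i) = sumn [seq (Z i j : nat) | j <- enum 'I_b].
  rewrite /row_reading; elim: (map _ _) => //= x s IH.
  by case: eqP => [->|_] /=; rewrite IH.
rewrite sumnE big_map enumT.
by case/andP: Z_margins => /forallP /(_ i) /eqP.
Qed.

Let size_row_reading_gt0 i : 0 < size (row_reading i).
Proof. by move: (R_gt0 i); rewrite -sumn_row_reading; case: (row_reading i). Qed.

Let size_mx_readingE : size (mx_reading Z) = \sum_i size (row_reading i).
Proof. by rewrite mx_reading_flatten size_flatten /shape -map_comp sumnE big_map enumT. Qed.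

Lemma leq_size_mx_reading : a <= size (mx_reading Z).
Proof.
rewrite size_mx_readingE -[a in a <= _]card_ord -sum1_card.
by apply: leq_sum => i _; apply: size_row_reading_gt0.
Qed.

(* Every row has a nonzero entry, so a reading of length [a] has exactly one per row. *)
Lemma mx_reading_row_margins :
  size (mx_reading Z) = a -> mx_reading Z = [seq R i | i : 'I_a <- enum 'I_a].
Proof.
rewrite size_mx_readingE => sizeE.
have rowE i : row_reading i = [:: R i].
  have : \sum_i (size (row_reading i) - 1) + \sum_(j < a) 1 = \sum_i size (row_reading i).
    rewrite -big_split; apply: eq_bigr => j _ /=.
    by rewrite subnK ?size_row_reading_gt0.
  rewrite sizeE sum1_card card_ord => /eqP; rewrite -[X in _ == X]add0n eqn_add2r.
  rewrite sum_nat_eq0 => /forallP /(_ i) /=; rewrite subn_eq0.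
  have := size_row_reading_gt0 i; have := sumn_row_reading i.
  by case: (row_reading i) => [|x [|y t]] //= <-; rewrite addn0.
rewrite mx_reading_flatten (eq_map rowE).
by rewrite -[RHS]flatten_seq1 -map_comp.
Qed.

End PositiveRowMargins.

Section StructureConstants.
Variable n : nat.

Lemma coef_sum (q r s : seq nat) :
  coef n q r s = \sum_(Z : 'M['I_n.+1]_(size q, size r) | in_S Z) (cZ Z == s).
Proof.
rewrite /coef cardsE -sum1_card big_mkcond [RHS]big_mkcond /=.
by apply: eq_bigr => Z _; rewrite unfold_in; case: (in_S Z); case: (cZ Z == s).
Qed.

Lemma leq_size_cZ (q : Comp n) r (Z : 'M['I_n.+1]_(size (val q), size r)) :
  in_S Z -> size (val q) <= size (cZ Z).
Proof. by move=> Z_margins; apply: leq_size_mx_reading Z_margins (@comp_gt0 n q). Qed.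

Lemma cZ_eq_size (q : Comp n) r (Z : 'M['I_n.+1]_(size (val q), size r)) :
  in_S Z -> size (cZ Z) = size (val q) -> cZ Z = val q.
Proof.
move=> Z_margins /(mx_reading_row_margins Z_margins (@comp_gt0 n q)).
by rewrite map_nth_enum_ord.
Qed.

Lemma coef_neq0_size (q : Comp n) r s :
  coef n (val q) r s != 0 -> size (val q) <= size s.
Proof.
rewrite coef_sum sum_nat_eq0 => /forallPn[Z]; rewrite negb_imply eqb0 negbK.
by case/andP=> Z_margins /eqP <-; apply: leq_size_cZ.
Qed.

Lemma coef_eq0_size (q : Comp n) r s :
  size s = size (val q) -> s != val q -> coef n (val q) r s = 0.
Proof.
move=> sizeE s_neq; rewrite coef_sum big1 // => Z Z_margins; apply/eqP; rewrite eqb0.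
by apply: contraNN s_neq => /eqP readingE; rewrite -readingE cZ_eq_size ?readingE.
Qed.

Lemma coef_diag (q : Comp n) r :
  coef n (val q) r (val q) =
  \sum_(Z : 'M['I_n.+1]_(size (val q), size r) | in_S Z) perm_eq (cZ Z) (val q).
Proof.
rewrite coef_sum; apply: eq_bigr => Z Z_margins; congr nat_of_bool.
apply/eqP/idP => [->|readingP]; first exact: perm_refl.
exact/cZ_eq_size/(seq.perm_size readingP).
Qed.

(* S(q, (n)) consists of the single column matrix with entries q. *)
Lemma coef_single_r (q : Comp n) s : coef n (val q) [:: n] s = (s == val q).
Proof.
pose Z0 : 'M['I_n.+1]_(size (val q), size [:: n]) :=
  (\matrix_(i, j) inord (nth 0 (val q) i))%R.
have q_le i : nth 0 (val q) i <= n.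
  have [i_lt|i_ge] := ltnP i (size (val q)); last by rewrite nth_default.
  by rewrite -[X in _ <= X](comp_sumn q) mem_le_sumn ?mem_nth.
have Z0E i j : (Z0 i j : nat) = nth 0 (val q) i by rewrite mxE inordK ?ltnS.
have Z0_margins : in_S Z0.
  apply/andP; split; apply/forallP => i; first by rewrite big_ord1 Z0E.
  rewrite (ord1 i) (eq_bigr _ (fun j _ => Z0E j ord0)) -[X in _ == X](comp_sumn q).
  by rewrite -[X in sumn X]map_nth_enum_ord sumnE big_map enumT.
have Z0_unique Z : in_S Z -> Z = Z0.
  case/andP=> /forallP Z_rows _; apply/matrixP => i j; apply: val_inj.
  by rewrite /= Z0E (ord1 j); have := Z_rows i; rewrite big_ord1 => /eqP.
rewrite coef_sum (bigD1 Z0) //= big1 ?addn0 => [|Z /andP[/Z0_unique-> /eqP//]].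
rewrite cZ_eq_size 1?eq_sym //; apply/eqP; rewrite eqn_leq leq_size_cZ // andbT.
by rewrite -[X in _ <= X]muln1 size_mx_reading.
Qed.

End StructureConstants.

Local Open Scope ring_scope.

Section ShapeNull.
Variables n p : nat.
Notation F := 'F_p.
Notation S := (Sig n p).

Definition struct_const (q r s : Comp n) : F := (coef n (val q) (val r) (val s))%:R.

Lemma sig_mulE (x y : S) s :
  sig_mul x y s = \sum_q \sum_r x q * y r * struct_const q r s.
Proof. by rewrite ffunE. Qed.

Definition shape_invariant (G : Comp n -> F) :=
  forall s t : Comp n, perm_eq (val s) (val t) -> G s = G t.

Definition shape_null (y : S) : bool :=
  [forall G : {ffun Comp n -> F},
    [forall s, forall t, perm_eq (val s) (val t) ==> (G s == G t)] ==>
    (\sum_r y r * G r == 0)].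

Lemma shape_nullP (y : S) :
  reflect (forall G, shape_invariant G -> \sum_r y r * G r = 0) (shape_null y).
Proof.
apply: (iffP forallP) => [y_null G G_inv | y_null G].
  have /implyP G_null := y_null [ffun r => G r].
  have /eqP G0 : \sum_r y r * [ffun r => G r] r == 0.
    apply: G_null; apply/forallP => s; apply/forallP => t; apply/implyP => st.
    by rewrite !ffunE (G_inv s t st).
  by rewrite -[RHS]G0; apply: eq_bigr => r _; rewrite ffunE.
apply/implyP => /forallP G_inv; apply/eqP/y_null => s t st.
by have /forallP/(_ t)/implyP/(_ st)/eqP := G_inv s.
Qed.

Definition seq_ext (G : Comp n -> F) (c : seq nat) : F := oapp G 0 (insub c).

Lemma seq_extE G c : seq_ext G c = \sum_s (c == val s)%:R * G s.
Proof.
rewrite /seq_ext; case: insubP => [s0 _ <-|c_out] /=.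
  rewrite (bigD1 s0) //= eqxx mul1r big1 ?addr0 // => s s_neq.
  by rewrite (inj_eq val_inj) eq_sym (negbTE s_neq) mul0r.
rewrite big1 // => s _; case: eqP => [cE|]; last by rewrite mul0r.
by move: c_out; rewrite cE (ssvalP s).
Qed.

Lemma seq_ext_perm G c c' :
  shape_invariant G -> perm_eq c c' -> seq_ext G c = seq_ext G c'.
Proof.
move=> G_inv cc'; rewrite /seq_ext.
case: insubP => [s c_in sE|c_out]; case: insubP => [t c'_in tE|c'_out] //=.
- by apply: G_inv; rewrite sE tE.
- by rewrite -(perm_mem_comps n cc') c_in in c'_out.
- by rewrite (perm_mem_comps n cc') c'_in in c_out.
Qed.

(* [eval_mul G q r] is the value at [B_q B_r] of the linear functional with values [G]. *)
Definition eval_mul (G : Comp n -> F) q r := \sum_s struct_const q r s * G s.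

Lemma eval_mulE G (q r : Comp n) : eval_mul G q r =
  \sum_(Z : 'M['I_n.+1]_(size (val q), size (val r)) | in_S Z) seq_ext G (cZ Z).
Proof.
rewrite /eval_mul; under eq_bigr do rewrite /struct_const coef_sum natr_sum mulr_suml.
by rewrite exchange_big; apply: eq_bigr => Z _; rewrite seq_extE.
Qed.

Lemma eval_mulC G q r : shape_invariant G -> eval_mul G q r = eval_mul G r q.
Proof.
move=> G_inv; rewrite !eval_mulE.
have G_perm c c' : perm_eq c c' -> seq_ext G c = seq_ext G c' by apply: seq_ext_perm.
exact: (sum_mx_reading_tr n.+1 G_perm _ _ (nth 0 (val q)) (nth 0 (val r))).
Qed.

Lemma eval_mul_perm_r G q r r' :
  shape_invariant G -> perm_eq (val r) (val r') -> eval_mul G q r = eval_mul G q r'.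
Proof.
move=> G_inv rr'; rewrite !eval_mulE.
have G_perm c c' : perm_eq c c' -> seq_ext G c = seq_ext G c' by apply: seq_ext_perm.
exact: (sum_mx_reading_perm_col n.+1 G_perm _ (nth 0 (val q)) rr').
Qed.

Lemma sig_mul_eval (x y : S) G :
  \sum_s sig_mul x y s * G s = \sum_q \sum_r x q * y r * eval_mul G q r.
Proof.
under eq_bigr do rewrite sig_mulE mulr_suml.
rewrite exchange_big; apply: eq_bigr => q _.
under eq_bigr do rewrite mulr_suml.
rewrite exchange_big; apply: eq_bigr => r _.
by rewrite mulr_sumr; apply: eq_bigr => s _; rewrite mulrA.
Qed.

Lemma shape_null_commutator (x y : S) :
  shape_null (sig_sub (sig_mul x y) (sig_mul y x)).
Proof.
apply/shape_nullP => G G_inv.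
under eq_bigr do rewrite ffunE mulrBl.
rewrite sumrB !sig_mul_eval exchange_big; apply/eqP; rewrite subr_eq0; apply/eqP.
apply: eq_bigr => q _; apply: eq_bigr => r _.
by rewrite (eval_mulC _ _ G_inv) [x r * _]mulrC.
Qed.

Lemma shape_null_mull (a y : S) : shape_null y -> shape_null (sig_mul a y).
Proof.
move=> /shape_nullP y_null; apply/shape_nullP => G G_inv.
rewrite sig_mul_eval big1 // => q _.
under eq_bigr do rewrite -mulrA.
rewrite -mulr_sumr y_null ?mulr0 // => r r'; exact: eval_mul_perm_r.
Qed.

Lemma shape_null0 : shape_null (sig0 n p).
Proof. by apply/shape_nullP => G _; rewrite big1 // => r _; rewrite ffunE mul0r. Qed.

Lemma shape_null_add (x y : S) : shape_null x -> shape_null y -> shape_null (sig_add x y).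
Proof.
move=> /shape_nullP x_null /shape_nullP y_null; apply/shape_nullP => G G_inv.
under eq_bigr do rewrite ffunE mulrDl.
by rewrite big_split /= x_null // y_null // addr0.
Qed.

Lemma shape_null_opp (x : S) : shape_null x -> shape_null (sig_opp x).
Proof.
move=> /shape_nullP x_null; apply/shape_nullP => G G_inv.
under eq_bigr do rewrite ffunE mulNr.
by rewrite sumrN x_null // oppr0.
Qed.

End ShapeNull.

Section Radical.
Variables n p : nat.
Hypothesis n_gt0 : (0 < n)%N.
Notation S := (Sig n p).

Let e : S := @Bbar n p (SeqSub (comp_single n_gt0)).

Lemma sig_mulr1 (x : S) : sig_mul x e = x.
Proof.
apply/ffunP => s; rewrite sig_mulE.
under eq_bigr => q _.
  rewrite (bigD1 (SeqSub (comp_single n_gt0))) //= big1 => [|r r_neq]; last first.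
    by rewrite /e ffunE (negbTE r_neq) mulr0 mul0r.
  rewrite /e ffunE eqxx mulr1 addr0 /struct_const coef_single_r (inj_eq val_inj).
  over.
rewrite (bigD1 s) //= eqxx mulr1 big1 ?addr0 // => q q_neq.
by rewrite eq_sym (negbTE q_neq) mulr0.
Qed.

Lemma sig_mulBr (w a b : S) s :
  sig_mul w (sig_sub a b) s = sig_mul w a s - sig_mul w b s.
Proof.
rewrite !sig_mulE -sumrB; apply: eq_bigr => q _; rewrite -sumrB.
by apply: eq_bigr => r _; rewrite ffunE mulrBr mulrBl.
Qed.

Lemma sig_mul_suml m (f : nat -> S) (y : S) s :
  sig_mul [ffun t => \sum_(k < m) f k t] y s = \sum_(k < m) sig_mul (f k) y s.
Proof.
rewrite sig_mulE.
under eq_bigr do (under eq_bigr do rewrite ffunE !mulr_suml; rewrite exchange_big /=).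
by rewrite exchange_big; apply: eq_bigr => k _; rewrite sig_mulE.
Qed.

Definition vanishes_below m (w : S) :=
  forall s : Comp n, (size (val s) < m)%N -> w s = 0.

Lemma shape_invariant_struct_const_diag (s : Comp n) :
  shape_invariant (fun r => struct_const p s r s).
Proof.
move=> r r' rr'; rewrite /struct_const !coef_diag !natr_sum.
apply: (sum_mx_reading_perm_col n.+1 (G := fun c => (perm_eq c (val s))%:R)) rr'.
by move=> c c' cc'; rewrite (seq.permPl cc').
Qed.

(* Right multiplication by a shape-null element kills the coefficients of the shortest
   compositions: in [B_q B_r] every [B_s] with [s != q] has [s] longer than [q], and
   the coefficient of [B_q] itself only depends on the shape of [r]. *)
Lemma vanishes_below_mul m w y :
  vanishes_below m w -> shape_null y -> vanishes_below m.+1 (sig_mul w y).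
Proof.
move=> w_below /shape_nullP y_null s s_lt.
rewrite sig_mulE (bigD1 s) //= [X in _ + X]big1 ?addr0.
  under eq_bigr do rewrite -mulrA.
  by rewrite -mulr_sumr y_null ?mulr0 //; apply: shape_invariant_struct_const_diag.
move=> q q_neq; have [q_lt|q_ge] := ltnP (size (val q)) m.
  by rewrite big1 // => r _; rewrite w_below // !mul0r.
rewrite big1 // => r _; rewrite /struct_const.
have [->|coef_neq0] := eqVneq (coef n (val q) (val r) (val s)) 0%N; first by rewrite mulr0.
have sizeE : size (val s) = size (val q).
  apply/eqP; rewrite eqn_leq (coef_neq0_size coef_neq0) andbT.
  by rewrite -ltnS (leq_trans s_lt) // ltnS.
by rewrite coef_eq0_size ?mulr0 // (inj_eq val_inj) eq_sym.
Qed.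

Fixpoint sig_rpow (z : S) k : S := if k is k'.+1 then sig_mul (sig_rpow z k') z else e.

Lemma sig_rpow_nil z : shape_null z -> sig_rpow z n.+1 = sig0 n p.
Proof.
move=> z_null; have below k : vanishes_below k (sig_rpow z k).
  by elim: k => [|k IHk] //=; apply: vanishes_below_mul.
by apply/ffunP => s; rewrite [RHS]ffunE below // ltnS size_comp.
Qed.

Lemma sig_mul_geom (y : S) : shape_null y ->
  sig_mul [ffun t => \sum_(k < n.+1) sig_rpow y k t] (sig_sub e y) = e.
Proof.
move=> y_null; apply/ffunP => s; rewrite sig_mul_suml.
under eq_bigr do rewrite sig_mulBr sig_mulr1.
rewrite sumrB big_ord_recl [X in _ - X]big_ord_recr /=.
rewrite -[sig_mul (sig_rpow y n) y]/(sig_rpow y n.+1) sig_rpow_nil //.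
rewrite [sig0 n p s]ffunE addr0.
by under eq_bigr do rewrite add0n; rewrite addrK.
Qed.

Section QuasiRegularIdeal.
Variable D : pred S.
Hypotheses (D0 : D (sig0 n p))
  (D_add : forall x y, D x -> D y -> D (sig_add x y))
  (D_opp : forall x, D x -> D (sig_opp x))
  (D_mul : forall a y, D y -> D (sig_mul a y))
  (D_quasi_regular : forall y, D y -> exists z, sig_mul z (sig_sub e y) = e).

(* [I + D] is a left ideal containing the maximal left ideal [I]; it cannot be the whole
   algebra, since [e = i + y] with [y] in [D] would make [i] left invertible. *)
Lemma quasi_regular_radical (y : S) : D y -> in_radical y.
Proof.
move=> Dy I [[I0 I_add I_opp I_mul] I_proper I_max].
pose J := [set v : S | [exists i in I, D (sig_sub v i)]].
have subvv (v : S) : sig_sub v v = sig0 n p by apply/ffunP => s; rewrite !ffunE subrr.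
have J_ideal : left_ideal J.
  split.
  - by rewrite inE; apply/exists_inP; exists (sig0 n p); rewrite ?subvv.
  - move=> v w; rewrite !inE => /exists_inP[i Ii Dv] /exists_inP[j Ij Dw].
    apply/exists_inP; exists (sig_add i j); first exact: I_add.
    suff -> : sig_sub (sig_add v w) (sig_add i j) = sig_add (sig_sub v i) (sig_sub w j).
      exact: D_add.
    by apply/ffunP => s; rewrite !ffunE opprD addrACA.
  - move=> v; rewrite !inE => /exists_inP[i Ii Dv].
    apply/exists_inP; exists (sig_opp i); first exact: I_opp.
    suff -> : sig_sub (sig_opp v) (sig_opp i) = sig_opp (sig_sub v i) by apply: D_opp.
    by apply/ffunP => s; rewrite !ffunE opprB opprK addrC.
  - move=> a v; rewrite !inE => /exists_inP[i Ii Dv].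
    apply/exists_inP; exists (sig_mul a i); first exact: I_mul.
    suff -> : sig_sub (sig_mul a v) (sig_mul a i) = sig_mul a (sig_sub v i) by apply: D_mul.
    by apply/ffunP => s; rewrite ffunE sig_mulBr.
have IJ : I \subset J.
  by apply/subsetP => i Ii; rewrite inE; apply/exists_inP; exists i; rewrite ?subvv.
have [JI|J_full] := I_max J J_ideal IJ.
  rewrite -JI inE; apply/exists_inP; exists (sig0 n p) => //.
  by rewrite (_ : sig_sub y _ = y) //; apply/ffunP => s; rewrite !ffunE subr0.
have : e \in J by rewrite J_full inE.
rewrite inE => /exists_inP[i Ii /D_quasi_regular[z]].
rewrite (_ : sig_sub e (sig_sub e i) = i); last first.
  by apply/ffunP => s; rewrite !ffunE opprB addrC subrK.
move=> zi; have Ie : e \in I by rewrite -zi I_mul.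
by case/negP: I_proper; apply/eqP/setP => b; rewrite inE -(sig_mulr1 b) I_mul.
Qed.

End QuasiRegularIdeal.

Lemma shape_null_radical (y : S) : shape_null y -> in_radical y.
Proof.
apply: quasi_regular_radical => [||||z z_null].
- exact: shape_null0.
- exact: shape_null_add.
- exact: shape_null_opp.
- exact: shape_null_mull.
- by exists [ffun t => \sum_(k < n.+1) sig_rpow z k t]; apply: sig_mul_geom.
Qed.

End Radical.

Theorem theorem2p3 (n p : nat) (hn : (0 < n)%N) (hp : prime p) :
  forall x y : Sig n p, in_radical (sig_sub (sig_mul x y) (sig_mul y x)).
Proof. by move=> x y; apply: shape_null_radical hn _ (shape_null_commutator x y). Qed.
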